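(* Let $D$ be a sqrt-bounded degree function and consider a GSAT maintained under get, insert and delete operations with counter-based rebuilding. Not counting the time of searching inside a node, the amortized cost of an insert, delete or get operation on a key $x$ is $O\!\left(\log_2\frac{m}{ac(x)}\right)$, where $m$ is the current total number of accesses and $ac(x)$ is the current number of accesses to $x$.
   Context: A function $f$ is sqrt-bounded if $f(m)\ge 1$ for all $m$ and there is a constant $M^*$ with $f(m)\le\max(\sqrt m,M^* )$ for all $m$. A Generic Self-Adjusting Tree (GSAT) with degree function $D$ for a set of integer keys $X=\{x_1<\dots<x_n\}$ with access counts $ac_i\ge1$ consists of $m=\sum_i ac_i$, an array of $k\le\lceil D(m)\rceil$ representative keys $x_{i_1}<\dots<x_{i_k}$ with their access counts, and $k+1$ child subtrees that are GSATs for the keys strictly before $x_{i_1}$, strictly between consecutive representatives, and strictly after $x_{i_k}$. For a subtree $T'$, $m(T')$ is the total access count of keys in $T'$. A GSAT is ideal if each child $T_j$ of the root satisfies $m(T_j)\le m/(D(m)+1)$ and each child is ideal. Dynamic operations: each node $v$ (root of subtree $T_v$) has a counter $C(v)$ and a value $im(T_v)$ equal to $m(T_v)$ at the time $T_v$ was last (re)built. An operation get/insert/delete on key $x$ walks down from the root along the search path of $x$, increments $C(v)$ for every visited node and increments the access count of $x$ if found; insert of an absent key creates a new node holding $x$ with access count 1 attached as a child of the last visited node; delete only marks the key. Afterwards, among the visited nodes $v$ with $C(v)>im(T_v)/4$, the one $u$ of minimum depth (if any) is chosen and $T_u$ is rebuilt into an ideal GSAT for its unmarked keys with their current access counts, counters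 set to $0$ and $im$ values reset. Cost of an operation: number of visited nodes plus, if a rebuild happens, $O(m(T_u))$ for rebuilding $T_u$. Here $ac(x)$ refers to the access count of $x$ in the current version of the tree (access counts of keys physically removed at a rebuild are lost). *)

From Stdlib Require Import Reals ZArith List.
Import ListNotations.
Open Scope R_scope.

Definition sqrt_bounded (D : nat -> R) : Prop :=
  (forall m, 1 <= D m) /\ (exists Mstar : R, forall m, D m <= Rmax (sqrt (INR m)) Mstar).

Definition ceilR (r : R) : Z := (- Int_part (- r))%Z.

Definition log2 (x : R) : R := ln x / ln 2.

Record entry := Entry { ekey : Z; eac : nat; emark : bool }.

(** [Leaf] is the empty subtree.  [Node es cs cnt im]: representatives [es]
    (in increasing key order), children [cs] ([length es + 1] of them),
    counter C(v) = [cnt], and im(T_v) = [im]. *)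
Inductive gsat : Type :=
| Leaf : gsat
| Node : list entry -> list gsat -> nat -> nat -> gsat.

Fixpoint tm (t : gsat) : nat :=
  match t with
  | Leaf => 0%nat
  | Node es cs _ _ => (list_sum (map eac es) + list_sum (map tm cs))%nat
  end.

Definition inorder (es : list entry) (ls : list (list entry)) : list entry :=
  match ls with
  | nil => nil
  | l0 :: ls' => l0 ++ concat (map (fun p => fst p :: snd p) (combine es ls'))
  end.

Fixpoint entries (t : gsat) : list entry :=
  match t with
  | Leaf => nil
  | Node es cs _ _ => inorder es (map entries cs)
  end.

Definition acx (t : gsat) (x : Z) : nat :=
  match find (fun e => Z.eqb (ekey e) x) (entries t) with
  | Some e => eac e
  | None => 0%nat
  end.

(** [fresh_ideal D t]: t is an ideal GSAT w.r.t. D (k <= ceil(D(m)) representatives,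
    k+1 children, each child of weight <= m/(D(m)+1), recursively), with positive
    access counts, no marks, all counters 0 and im = m at every node, i.e. a
    freshly (re)built ideal GSAT.  The key order is imposed separately via
    [entries]. *)
Fixpoint fresh_ideal (D : nat -> R) (t : gsat) : Prop :=
  match t with
  | Leaf => True
  | Node es cs c im =>
      let m := tm (Node es cs c im) in
      c = 0%nat /\ im = m /\
      Forall (fun e => emark e = false /\ (1 <= eac e)%nat) es /\
      (1 <= length es)%nat /\
      (Z.of_nat (length es) <= ceilR (D m))%Z /\
      length cs = S (length es) /\
      Forall (fun ch => INR (tm ch) <= INR m / (D m + 1)) cs /\
      (fix allf (l : list gsat) : Prop :=
         match l with
         | nil => True
         | ch :: l' => fresh_ideal D ch /\ allf l'
         end) cs
  end.

Definition rebuild (D : nat -> R) (t t' : gsat) : Prop :=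
  fresh_ideal D t' /\ entries t' = filter (fun e => negb (emark e)) (entries t).

Inductive op : Type := Get | Insert | Delete.

(** effect of the operation on the entry holding x when x is found;
    [None] = operation not applicable (get/delete of a deleted key) *)
Definition upd (o : op) (e : entry) : option entry :=
  match o with
  | Get => if emark e then None else Some (Entry (ekey e) (S (eac e)) false)
  | Insert => Some (Entry (ekey e) (S (eac e)) false)
  | Delete => if emark e then None else Some (Entry (ekey e) (S (eac e)) true)
  end.

(** No rebuild here. *)
Inductive access (o : op) (x : Z) : gsat -> gsat -> nat -> Prop :=
| acc_new :
    o = Insert ->
    access o x Leaf (Node [Entry x 1 false] [Leaf; Leaf] 0 1) 0
| acc_found : forall es1 e es2 e' cs c im,
    ekey e = x -> upd o e = Some e' ->
    access o x (Node (es1 ++ e :: es2) cs c im)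
                 (Node (es1 ++ e' :: es2) cs (S c) im) 1
| acc_down : forall es cs1 ch cs2 c im ch' v,
    ~ In x (map ekey es) ->
    length cs1 = length (filter (fun e => Z.ltb (ekey e) x) es) ->
    access o x ch ch' v ->
    access o x (Node es (cs1 ++ ch :: cs2) c im)
                 (Node es (cs1 ++ ch' :: cs2) (S c) im) (S v).

(** [opstep D o x t t' cost]: one complete operation, including the rebuild of
    the subtree T_u of the minimum-depth visited node u with C(u) > im(T_u)/4
    (counted after the increment).  cost = visited nodes + m(T_u) if a rebuild
    happens (the O(m(T_u)) rebuild cost, with constant 1). *)
Inductive opstep (D : nat -> R) (o : op) (x : Z) : gsat -> gsat -> nat -> Prop :=
| os_leaf :
    o = Insert ->
    opstep D o x Leaf (Node [Entry x 1 false] [Leaf; Leaf] 0 1) 0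
| os_rebuild : forall es cs c im t1 v t2,
    INR (S c) > INR im / 4 ->
    access o x (Node es cs c im) t1 v ->
    rebuild D t1 t2 ->
    opstep D o x (Node es cs c im) t2 (v + tm t1)
| os_found : forall es1 e es2 e' cs c im,
    ~ (INR (S c) > INR im / 4) ->
    ekey e = x -> upd o e = Some e' ->
    opstep D o x (Node (es1 ++ e :: es2) cs c im)
                   (Node (es1 ++ e' :: es2) cs (S c) im) 1
| os_down : forall es cs1 ch cs2 c im ch' cost,
    ~ (INR (S c) > INR im / 4) ->
    ~ In x (map ekey es) ->
    length cs1 = length (filter (fun e => Z.ltb (ekey e) x) es) ->
    opstep D o x ch ch' cost ->
    opstep D o x (Node es (cs1 ++ ch :: cs2) c im)
                   (Node es (cs1 ++ ch' :: cs2) (S c) im) (S cost).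

(** [exec D t A B]: t is reachable from the empty GSAT by a sequence of
    operations whose total actual cost is A, and B = sum over the operations
    of (1 + log2 (m / ac(x))), where m and ac(x) are the total access count
    and the access count of x right after the access (i.e. m(before)+1 and
    ac_before(x)+1, with ac_before(x) = 0 for a newly inserted key). *)
Inductive exec (D : nat -> R) : gsat -> R -> R -> Prop :=
| exec_nil : exec D Leaf 0 0
| exec_cons : forall t A B o x t' cost,
    exec D t A B ->
    opstep D o x t t' cost ->
    exec D t' (A + INR cost)
              (B + (1 + log2 (INR (S (tm t)) / INR (S (acx t x))))).

From Stdlib Require Import Reals ZArith List Lia Lra Sorting.Sorted.
Import ListNotations.
Open Scope R_scope.

(* A node with counter c and snapshot im carries the potential
   10c + min(16c, 4im - 16c).  A visit increments c, raising the potential by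
   at most 26, and lowering it by 6 once c > im/8; when c exceeds im/4 the
   potential is at least 10c, enough to pay for rebuilding the subtree, whose
   weight is at most im + c.  The remaining visits are to light nodes
   (8c <= im).  The gauge im + c shrinks by a factor 3/4 from a node to its
   child, and at a light node it is at most 9/4 times the weight of the
   subtree, which is at least ac(x); so the search path of x contains
   O(log (m / ac(x))) light nodes. *)

Lemma gsat_nested_ind (P : gsat -> Prop) :
  P Leaf -> (forall es cs c im, Forall P cs -> P (Node es cs c im)) -> forall t, P t.
Proof.
  intros HL HN.
  refine (fix F t := match t with
    | Leaf => HL
    | Node es cs c im => HN es cs c im
        ((fix G l := match l return Forall P l with
          | nil => Forall_nil _
          | ch :: l' => Forall_cons _ (F ch) (G l')
          end) cs)
    end).
Qed.

Inductive every_node (P : list entry -> list gsat -> nat -> nat -> Prop) : gsat -> Prop :=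
| every_node_Leaf : every_node P Leaf
| every_node_Node es cs c im :
    P es cs c im -> Forall (every_node P) cs -> every_node P (Node es cs c im).

Lemma every_node_inv P es cs c im :
  every_node P (Node es cs c im) -> P es cs c im /\ Forall (every_node P) cs.
Proof. intros H. inversion H; auto. Qed.

Lemma every_node_impl (P Q : list entry -> list gsat -> nat -> nat -> Prop) t :
  (forall es cs c im, P es cs c im -> Q es cs c im) -> every_node P t -> every_node Q t.
Proof.
  intros HPQ. induction t as [|es cs c im IH] using gsat_nested_ind; intros Ht;
    [constructor|].
  apply every_node_inv in Ht as [HP Hcs]. constructor; auto.
  rewrite Forall_forall in *. auto.
Qed.

Section Lists.
Local Open Scope nat_scope.

Lemma list_sum_map_mid {A} (f : A -> nat) l1 a l2 :
  list_sum (map f (l1 ++ a :: l2)) = list_sum (map f l1) + f a + list_sum (map f l2).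
Proof. rewrite map_app, list_sum_app. simpl. lia. Qed.

Lemma list_sum_map_In {A} (f : A -> nat) l a : In a l -> f a <= list_sum (map f l).
Proof.
  induction l as [|b l IH]; simpl; [tauto|].
  intros [->|H]; [lia|]. specialize (IH H). lia.
Qed.

Lemma list_sum_map_filter {A} (f : A -> nat) (p : A -> bool) l :
  list_sum (map f (filter p l)) <= list_sum (map f l).
Proof. induction l as [|a l IH]; simpl; auto. destruct (p a); simpl; lia. Qed.

Lemma list_sum_map_zero {A} (f : A -> nat) l :
  Forall (fun a => f a = 0) l -> list_sum (map f l) = 0.
Proof. induction 1; simpl; lia. Qed.

Lemma Forall_mid {A} (P : A -> Prop) l1 a l2 : Forall P (l1 ++ a :: l2) -> P a.
Proof. rewrite Forall_app. intros [_ H]. inversion H; auto. Qed.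

Lemma Forall_replace_mid {A} (P : A -> Prop) l1 a a' l2 :
  Forall P (l1 ++ a :: l2) -> P a' -> Forall P (l1 ++ a' :: l2).
Proof. rewrite !Forall_app. intros [H1 H2] H. inversion H2; auto. Qed.

End Lists.

Lemma StronglySorted_app {A} (R : A -> A -> Prop) l1 l2 :
  StronglySorted R (l1 ++ l2) <->
  StronglySorted R l1 /\ StronglySorted R l2 /\ (forall a b, In a l1 -> In b l2 -> R a b).
Proof.
  induction l1 as [|a l1 IH]; simpl.
  - split; [|tauto]. intros H. repeat split; auto; [constructor|tauto].
  - split.
    + intros H. apply StronglySorted_inv in H as [H1 H2].
      apply IH in H1 as [Ha [Hb Hc]]. rewrite Forall_forall in H2.
      repeat split; auto.
      * constructor; auto. rewrite Forall_forall. intros; apply H2, in_or_app; auto.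
      * intros a0 b [->|Hin] Hb'; auto. apply H2, in_or_app; auto.
    + intros [H1 [H2 H3]]. apply StronglySorted_inv in H1 as [H1 H4].
      constructor; [apply IH; auto|].
      rewrite Forall_forall in *. intros y Hy. apply in_app_or in Hy as [Hy|Hy]; auto.
Qed.

Definition sorted_keys (l : list entry) : Prop := StronglySorted Z.lt (map ekey l).

Lemma sorted_keys_app l1 l2 :
  sorted_keys (l1 ++ l2) <-> sorted_keys l1 /\ sorted_keys l2 /\
    (forall a b, In a l1 -> In b l2 -> (ekey a < ekey b)%Z).
Proof.
  unfold sorted_keys. rewrite map_app, StronglySorted_app.
  split; intros [H1 [H2 H3]]; repeat split; auto.
  - intros a b Ha Hb. apply H3; apply in_map; auto.
  - intros a b Ha Hb. apply in_map_iff in Ha as [a' [<- Ha]].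
    apply in_map_iff in Hb as [b' [<- Hb]]. auto.
Qed.

Lemma sorted_keys_filter p l : sorted_keys l -> sorted_keys (filter p l).
Proof.
  unfold sorted_keys. induction l as [|a l IH]; simpl; auto.
  intros H. apply StronglySorted_inv in H as [H1 H2].
  destruct (p a); simpl; auto. constructor; auto.
  rewrite Forall_forall in *. intros y Hy. apply in_map_iff in Hy as [y' [<- Hy]].
  apply filter_In in Hy. apply H2, in_map. tauto.
Qed.

Definition adds_only (x : Z) (l l' : list entry) : Prop :=
  forall k, In k (map ekey l') -> In k (map ekey l) \/ k = x.

Section Inorder.
Local Open Scope nat_scope.

Lemma map_inorder {B} (f : entry -> B) es es' ls :
  map f es = map f es' -> map f (inorder es ls) = map f (inorder es' ls).
Proof.
  destruct ls as [|l0 ls]; [reflexivity|]. simpl. intros H. rewrite !map_app. f_equal.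
  revert es' ls H. induction es as [|e es IH]; intros es' ls H.
  - destruct es'; [reflexivity|discriminate].
  - destruct es' as [|e' es']; [discriminate|]. simpl in H. injection H as H1 H2.
    destruct ls as [|l ls]; [reflexivity|]. simpl. rewrite !map_app. simpl.
    rewrite H1, (IH es' ls H2). reflexivity.
Qed.

Lemma list_sum_inorder es ls :
  length ls = S (length es) ->
  list_sum (map eac (inorder es ls)) =
  list_sum (map eac es) + list_sum (map (fun l => list_sum (map eac l)) ls).
Proof.
  destruct ls as [|l0 ls]; [discriminate|]. simpl. intros H. injection H as H.
  rewrite map_app, list_sum_app.
  enough (list_sum (map eac (concat (map (fun p => fst p :: snd p) (combine es ls)))) =
    list_sum (map eac es) + list_sum (map (fun l => list_sum (map eac l)) ls)) by lia.
  revert ls H. induction es as [|e es IH]; intros [|l ls] H; try discriminate; [reflexivity|].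
  injection H as H. simpl. rewrite map_app, list_sum_app, IH by auto. lia.
Qed.

Fixpoint inorder_prefix (es : list entry) (ls : list (list entry)) : list entry :=
  match es, ls with
  | e :: es', l0 :: ls' => l0 ++ e :: inorder_prefix es' ls'
  | _, _ => nil
  end.

Definition inorder_suffix (es : list entry) (ls : list (list entry)) : list entry :=
  concat (map (fun p => fst p :: snd p) (combine es ls)).

Lemma inorder_app es1 ls1 es2 l ls2 :
  length ls1 = length es1 ->
  inorder (es1 ++ es2) (ls1 ++ l :: ls2) =
  inorder_prefix es1 ls1 ++ l ++ inorder_suffix es2 ls2.
Proof.
  revert ls1. induction es1 as [|e es1 IH]; intros [|l0 ls1] Hl; try discriminate;
    [reflexivity|].
  injection Hl as Hl. destruct ls1 as [|l1 ls1].
  - destruct es1; [|discriminate]. simpl. rewrite <- app_assoc. reflexivity.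
  - transitivity (l0 ++ e :: inorder (es1 ++ es2) ((l1 :: ls1) ++ l :: ls2));
      [reflexivity|].
    rewrite IH by auto. simpl. rewrite <- app_assoc. reflexivity.
Qed.

Lemma In_inorder_prefix es ls e :
  length ls = length es -> In e es -> In e (inorder_prefix es ls).
Proof.
  revert ls. induction es as [|e0 es IH]; intros [|l0 ls] Hl H; try discriminate;
    [contradiction|].
  simpl. apply in_or_app. right. destruct H as [->|H]; [left; auto|right; auto].
Qed.

Lemma In_inorder_suffix es ls e :
  length ls = length es -> In e es -> In e (inorder_suffix es ls).
Proof.
  unfold inorder_suffix. revert ls.
  induction es as [|e0 es IH]; intros [|l0 ls] Hl H; try discriminate; [contradiction|].
  simpl. destruct H as [->|H]; [left; auto|right; apply in_or_app; right; auto].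
Qed.

End Inorder.

Definition well_shaped (es : list entry) (cs : list gsat) (c im : nat) : Prop :=
  length cs = S (length es).

Lemma tm_entries t : every_node well_shaped t -> tm t = list_sum (map eac (entries t)).
Proof.
  induction t as [|es cs c im IH] using gsat_nested_ind; [reflexivity|].
  intros Ht. apply every_node_inv in Ht as [Hl Hcs]. unfold well_shaped in Hl. simpl.
  rewrite list_sum_inorder by (rewrite length_map; auto).
  f_equal. rewrite map_map. clear Hl. induction cs as [|ch cs IHcs]; [reflexivity|].
  apply Forall_cons_iff in IH as [IHch IH], Hcs as [Hch Hcs].
  simpl. rewrite IHch, IHcs; auto.
Qed.

Lemma acx_le_tm t x : every_node well_shaped t -> (acx t x <= tm t)%nat.
Proof.
  intros Ht. unfold acx. destruct (find _ _) as [e|] eqn:E; [|lia].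
  apply find_some in E as [E _]. rewrite tm_entries by auto.
  apply (list_sum_map_In eac), E.
Qed.

Lemma inorder_prefix_lt x es ls rest :
  length ls = length es -> sorted_keys (inorder_prefix es ls ++ rest) ->
  (forall e, In e es -> (ekey e < x)%Z) ->
  forall a, In a (inorder_prefix es ls) -> (ekey a < x)%Z.
Proof.
  revert ls. induction es as [|e es IH]; intros [|l0 ls] Hl Hs He a Ha;
    try discriminate; try contradiction.
  injection Hl as Hl. simpl in Ha, Hs. rewrite <- app_assoc in Hs.
  apply sorted_keys_app in Hs as [_ [Hs Hlt]].
  assert (Hex : (ekey e < x)%Z) by (apply He; left; auto).
  apply in_app_or in Ha as [Ha|[->|Ha]]; auto.
  - specialize (Hlt a e Ha (or_introl eq_refl)). lia.
  - apply StronglySorted_inv in Hs as [Hs _].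
    apply (IH ls Hl Hs); auto. intros; apply He; right; auto.
Qed.

Lemma inorder_suffix_gt x es ls :
  length ls = length es -> sorted_keys (inorder_suffix es ls) ->
  (forall e, In e es -> (x < ekey e)%Z) ->
  forall a, In a (inorder_suffix es ls) -> (x < ekey a)%Z.
Proof.
  unfold inorder_suffix. destruct es as [|e es], ls as [|l ls]; simpl;
    intros Hl Hs He a Ha; try contradiction; try discriminate.
  assert (Hx : (x < ekey e)%Z) by (apply He; left; auto).
  destruct Ha as [->|Ha]; auto.
  apply StronglySorted_inv in Hs as [_ Hs]. rewrite Forall_forall in Hs.
  specialize (Hs (ekey a) (in_map _ _ _ Ha)). lia.
Qed.

Lemma rank_split x es1 es2 :
  (forall a b, In a es1 -> In b es2 -> (ekey a < ekey b)%Z) ->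
  ~ In x (map ekey (es1 ++ es2)) ->
  length (filter (fun e => Z.ltb (ekey e) x) (es1 ++ es2)) = length es1 ->
  (forall a, In a es1 -> (ekey a < x)%Z) /\ (forall b, In b es2 -> (x < ekey b)%Z).
Proof.
  intros Hlt Hx Hl. rewrite filter_app, length_app in Hl.
  assert (Hgt : forall b, In b es2 -> (x < ekey b)%Z).
  { intros b Hb. destruct (Z.lt_trichotomy x (ekey b)) as [H|[H|H]]; auto; exfalso.
    - apply Hx. rewrite H, map_app. apply in_or_app, or_intror, in_map, Hb.
    - rewrite forallb_filter_id in Hl.
      + assert (In b (filter (fun e => Z.ltb (ekey e) x) es2))
          by (apply filter_In; split; [auto|apply Z.ltb_lt; auto]).
        destruct (filter _ es2); [contradiction|simpl in Hl; lia].
      + apply forallb_forall. intros a Ha. apply Z.ltb_lt.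
        specialize (Hlt a b Ha Hb). lia. }
  split; auto.
  destruct (filter (fun e => Z.ltb (ekey e) x) es2) as [|b l] eqn:E.
  - rewrite Nat.add_0_r in Hl. apply filter_length_forallb in Hl.
    rewrite forallb_forall in Hl. intros a Ha. apply Z.ltb_lt. auto.
  - assert (Hb : In b (filter (fun e => Z.ltb (ekey e) x) es2)) by (rewrite E; left; auto).
    apply filter_In in Hb as [Hb Hbx]. apply Z.ltb_lt in Hbx. specialize (Hgt b Hb). lia.
Qed.

Lemma entries_descend es cs1 ch cs2 c im x :
  length (cs1 ++ ch :: cs2) = S (length es) -> ~ In x (map ekey es) ->
  length cs1 = length (filter (fun e => Z.ltb (ekey e) x) es) ->
  sorted_keys (entries (Node es (cs1 ++ ch :: cs2) c im)) ->
  exists EA ER,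
    (forall ch0 c0 im0, entries (Node es (cs1 ++ ch0 :: cs2) c0 im0) = EA ++ entries ch0 ++ ER) /\
    (forall a, In a EA -> (ekey a < x)%Z) /\ (forall a, In a ER -> (x < ekey a)%Z).
Proof.
  intros Hlen Hx Hcnt Hs.
  pose proof (filter_length_le (fun e => Z.ltb (ekey e) x) es) as Hle.
  set (n := length cs1) in *.
  set (es1 := firstn n es). set (es2 := skipn n es).
  assert (Hes : es = es1 ++ es2) by (symmetry; apply firstn_skipn).
  assert (Hl1 : length es1 = n) by (apply firstn_length_le; lia).
  assert (Hl2 : length es2 = length cs2).
  { rewrite length_app in Hlen. simpl in Hlen. rewrite Hes, length_app in Hlen.
    unfold n in *. lia. }
  assert (Hent : forall ch0 c0 im0, entries (Node es (cs1 ++ ch0 :: cs2) c0 im0) =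
     inorder_prefix es1 (map entries cs1) ++ entries ch0 ++ inorder_suffix es2 (map entries cs2)).
  { intros. simpl. rewrite map_app, Hes. apply inorder_app. rewrite length_map. auto. }
  exists (inorder_prefix es1 (map entries cs1)), (inorder_suffix es2 (map entries cs2)).
  split; [exact Hent|].
  rewrite Hent in Hs. pose proof Hs as Hs0.
  apply sorted_keys_app in Hs as [HA [HR Hlt]]. apply sorted_keys_app in HR as [_ [HR _]].
  destruct (rank_split x es1 es2) as [Hk1 Hk2].
  - intros a b Ha Hb. apply Hlt.
    + apply In_inorder_prefix; auto. rewrite length_map; auto.
    + apply in_or_app. right. apply In_inorder_suffix; auto. rewrite length_map; auto.
  - rewrite <- Hes. auto.
  - rewrite <- Hes, Hl1. auto.
  - split.
    + eapply inorder_prefix_lt; eauto. rewrite length_map; auto.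
    + eapply inorder_suffix_gt; eauto. rewrite length_map; auto.
Qed.

Lemma find_key_between EA E ER x :
  (forall a, In a EA -> (ekey a < x)%Z) -> (forall a, In a ER -> (x < ekey a)%Z) ->
  find (fun e => Z.eqb (ekey e) x) (EA ++ E ++ ER) = find (fun e => Z.eqb (ekey e) x) E.
Proof.
  intros HA HR. induction EA as [|a EA IH]; simpl.
  - induction E as [|e E IHE]; simpl.
    + induction ER as [|b ER IHR]; simpl; auto.
      rewrite (proj2 (Z.eqb_neq _ _)) by (specialize (HR b (or_introl eq_refl)); lia).
      apply IHR. intros; apply HR; right; auto.
    + destruct (Z.eqb (ekey e) x); auto.
  - rewrite (proj2 (Z.eqb_neq _ _)) by (specialize (HA a (or_introl eq_refl)); lia).
    apply IH. intros; apply HA; right; auto.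
Qed.

Lemma sorted_replace_between EA E E' ER x :
  (forall a, In a EA -> (ekey a < x)%Z) -> (forall a, In a ER -> (x < ekey a)%Z) ->
  sorted_keys (EA ++ E ++ ER) -> sorted_keys E' -> adds_only x E E' ->
  sorted_keys (EA ++ E' ++ ER) /\ adds_only x (EA ++ E ++ ER) (EA ++ E' ++ ER).
Proof.
  intros HA HR Hs Hs' Hk.
  apply sorted_keys_app in Hs as [HsA [HsER HltA]].
  apply sorted_keys_app in HsER as [_ [HsR HltE]].
  assert (Hold : forall a, In a E' -> (exists a0, In a0 E /\ ekey a0 = ekey a) \/ ekey a = x).
  { intros a Ha. destruct (Hk (ekey a) (in_map _ _ _ Ha)) as [H|H]; auto.
    left. apply in_map_iff in H as [a0 [? ?]]. eauto. }
  split.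
  - apply sorted_keys_app. split; [auto|split].
    + apply sorted_keys_app. split; [auto|split; [auto|]].
      intros a b Ha Hb. destruct (Hold a Ha) as [[a0 [Ha0 <-]]| ->]; auto.
    + intros a b Ha Hb. apply in_app_or in Hb as [Hb|Hb].
      * destruct (Hold b Hb) as [[b0 [Hb0 <-]]| ->]; auto. apply HltA; auto. apply in_or_app; auto.
      * apply HltA; auto. apply in_or_app; auto.
  - intros k. rewrite !map_app. intros Hin. apply in_app_or in Hin as [Hin|Hin].
    + left. apply in_or_app; auto.
    + apply in_app_or in Hin as [Hin|Hin].
      * destruct (Hk k Hin); auto. left. apply in_or_app; right; apply in_or_app; auto.
      * left. apply in_or_app; right; apply in_or_app; auto.
Qed.

Lemma sorted_descend es cs1 ch cs2 c im x :
  length (cs1 ++ ch :: cs2) = S (length es) -> ~ In x (map ekey es) ->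
  length cs1 = length (filter (fun e => Z.ltb (ekey e) x) es) ->
  sorted_keys (entries (Node es (cs1 ++ ch :: cs2) c im)) ->
  sorted_keys (entries ch) /\ acx (Node es (cs1 ++ ch :: cs2) c im) x = acx ch x /\
  forall ch' c' im', sorted_keys (entries ch') -> adds_only x (entries ch) (entries ch') ->
    sorted_keys (entries (Node es (cs1 ++ ch' :: cs2) c' im')) /\
    adds_only x (entries (Node es (cs1 ++ ch :: cs2) c im))
                (entries (Node es (cs1 ++ ch' :: cs2) c' im')).
Proof.
  intros Hlen Hx Hcnt Hs.
  destruct (entries_descend es cs1 ch cs2 c im x Hlen Hx Hcnt Hs) as [EA [ER [Hent [HA HR]]]].
  rewrite Hent in Hs. split; [|split].
  - apply sorted_keys_app in Hs as [_ [Hs _]]. apply sorted_keys_app in Hs. tauto.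
  - unfold acx. rewrite Hent, find_key_between; auto.
  - intros ch' c' im' Hs' Hk. rewrite !Hent. apply sorted_replace_between; auto.
Qed.

Lemma keys_found es1 e e' es2 cs c im c' im' :
  ekey e' = ekey e ->
  map ekey (entries (Node (es1 ++ e' :: es2) cs c' im')) =
  map ekey (entries (Node (es1 ++ e :: es2) cs c im)).
Proof.
  intros H. apply map_inorder. rewrite !map_app. simpl. rewrite H. reflexivity.
Qed.

Section Invariant.
Local Open Scope nat_scope.

Definition im_of (t : gsat) : nat := match t with Leaf => 0 | Node _ _ _ im => im end.
Definition counter (t : gsat) : nat := match t with Leaf => 0 | Node _ _ c _ => c end.
Definition gauge (t : gsat) : nat := im_of t + counter t.

(* [im] was the weight of the subtree at its last rebuild, when every child
   weighed at most half of it; since then at most [c] operations went through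
   the node.  [inv_slack] yields [im <= tm + 4 * c] for whole subtrees
   ([im_of_le_tm]), which survives the rebuilds of descendants. *)
Record node_inv (es : list entry) (cs : list gsat) (c im : nat) : Prop := {
  inv_arity : length cs = S (length es);
  inv_weight : 1 <= list_sum (map eac es);
  inv_counter : 4 * c <= im;
  inv_mass : tm (Node es cs c im) <= im + c;
  inv_slack : im + 4 * list_sum (map counter cs) <=
              list_sum (map eac es) + 4 * c + list_sum (map im_of cs);
  inv_children : Forall (fun w => 2 * gauge w <= im + 2 * c) cs }.

Lemma node_inv_well_shaped t : every_node node_inv t -> every_node well_shaped t.
Proof. apply every_node_impl. intros es cs c im []. auto. Qed.

Lemma im_of_le_tm t : every_node node_inv t -> im_of t <= tm t + 4 * counter t.
Proof.
  induction t as [|es cs c im IH] using gsat_nested_ind; simpl; [lia|].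
  intros Ht. apply every_node_inv in Ht as [[_ _ _ _ Hslack _] Hcs].
  enough (list_sum (map im_of cs) <= list_sum (map tm cs) + 4 * list_sum (map counter cs))
    by lia.
  clear Hslack. induction cs as [|ch cs IHcs]; simpl; [lia|].
  apply Forall_cons_iff in IH as [IHch IH], Hcs as [Hch Hcs].
  specialize (IHch Hch). specialize (IHcs IH Hcs). lia.
Qed.

Definition node_potential (c im : nat) : nat := 10 * c + Nat.min (16 * c) (4 * im - 16 * c).

Fixpoint potential (t : gsat) : nat :=
  match t with
  | Leaf => 0
  | Node _ cs c im => node_potential c im + list_sum (map potential cs)
  end.

Lemma node_potential_succ c im : node_potential (S c) im <= node_potential c im + 26.
Proof. unfold node_potential. lia. Qed.

Lemma node_potential_succ_heavy c im :
  4 * S c <= im -> im < 8 * c -> node_potential (S c) im + 6 <= node_potential c im.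
Proof. unfold node_potential. lia. Qed.

Lemma node_potential_rebuild c im :
  4 * c <= im -> im < 4 * S c -> 2 * (im + c + 1) <= node_potential c im + 30.
Proof. unfold node_potential. lia. Qed.

(* The bound guaranteed by a search path that visits [n] light nodes in a
   subtree of weight [m] and gauge [g], where [a = max 1 ac(x)]. *)
Definition descent_bound (a m g n : nat) : Prop :=
  match n with
  | 0 => True
  | S k => 4 * 4 ^ k * a <= 9 * 3 ^ k * m /\ 4 ^ k * a <= 3 ^ k * g
  end.

Lemma descent_bound_mono a m g m' g' n :
  m' <= m -> g' <= g -> descent_bound a m' g' n -> descent_bound a m g n.
Proof.
  destruct n as [|k]; simpl; [auto|]. intros Hm Hg [H1 H2].
  split; [apply (Nat.le_trans _ _ _ H1)|apply (Nat.le_trans _ _ _ H2)];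
    apply Nat.mul_le_mono_l; auto.
Qed.

Lemma descent_bound_light a m g m' g' n :
  4 * g' <= 3 * g -> 4 * g <= 9 * m -> a <= m -> m <= g ->
  descent_bound a m' g' n -> descent_bound a m g (S n).
Proof.
  intros Hg Hgm Ham Hmg. destruct n as [|k]; simpl; [lia|]. intros [_ H].
  assert (H4 : 4 ^ S k * a <= 3 ^ S k * g).
  { rewrite !Nat.pow_succ_r'.
    assert (3 ^ k * (4 * g') <= 3 ^ k * (3 * g)) by (apply Nat.mul_le_mono_l; auto).
    nia. }
  split; [|exact H4].
  assert (3 ^ S k * (4 * g) <= 3 ^ S k * (9 * m)) by (apply Nat.mul_le_mono_l; auto).
  nia.
Qed.

End Invariant.

Lemma upd_spec o e e' : upd o e = Some e' -> ekey e' = ekey e /\ eac e' = S (eac e).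
Proof.
  destruct o; simpl; [destruct (emark e)| |destruct (emark e)]; intros H;
    try discriminate; injection H as <-; simpl; auto.
Qed.

Lemma rebuild_trigger c im : INR (S c) > INR im / 4 <-> (im < 4 * S c)%nat.
Proof.
  split; intros H.
  - apply INR_lt. rewrite mult_INR. simpl (INR 4). lra.
  - apply lt_INR in H. rewrite mult_INR in H. simpl (INR 4) in H. lra.
Qed.

Lemma no_rebuild_trigger c im : ~ (INR (S c) > INR im / 4) -> (4 * S c <= im)%nat.
Proof. rewrite rebuild_trigger. lia. Qed.

Lemma le_div_succ_half a m d : 1 <= d -> INR a <= INR m / (d + 1) -> (2 * a <= m)%nat.
Proof.
  intros Hd H. apply INR_le. rewrite mult_INR. simpl (INR 2).
  pose proof (pos_INR m).
  assert (INR m / (d + 1) <= INR m / 2).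
  { apply Rmult_le_compat_l; auto. apply Rinv_le_contravar; lra. }
  lra.
Qed.

Lemma fresh_ideal_invariant D t : (forall m, 1 <= D m) -> fresh_ideal D t ->
  every_node node_inv t /\ potential t = 0%nat /\ counter t = 0%nat /\ im_of t = tm t.
Proof.
  intros HD. induction t as [|es cs c im IH] using gsat_nested_ind.
  - intros _. repeat split; constructor.
  - intros Hf. simpl in Hf.
    destruct Hf as [-> [Him [Hes [Hlen [_ [Harity [Hlight Hall]]]]]]].
    assert (Hfresh : Forall (fresh_ideal D) cs).
    { clear - Hall. induction cs as [|ch cs IHcs]; constructor; [apply Hall|apply IHcs, Hall]. }
    assert (Hcs : Forall (fun ch => every_node node_inv ch /\ potential ch = 0%nat /\
                     counter ch = 0%nat /\ im_of ch = tm ch) cs).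
    { rewrite Forall_forall in *. auto. }
    assert (Hcounters : list_sum (map counter cs) = 0%nat).
    { apply list_sum_map_zero. eapply Forall_impl; [|exact Hcs]. simpl. tauto. }
    assert (Hpotentials : list_sum (map potential cs) = 0%nat).
    { apply list_sum_map_zero. eapply Forall_impl; [|exact Hcs]. simpl. tauto. }
    assert (Hims : map im_of cs = map tm cs).
    { apply map_ext_Forall. eapply Forall_impl; [|exact Hcs]. simpl. tauto. }
    assert (Hweight : (1 <= list_sum (map eac es))%nat).
    { destruct es as [|e es]; simpl in Hlen; [lia|].
      inversion Hes as [|? ? [_ He] _]. simpl. lia. }
    repeat split; simpl; try lia.
    constructor.
    + constructor; auto.
      * lia.
      * simpl. lia.
      * rewrite Hcounters, Hims, Him. lia.
      * rewrite Forall_forall in *. intros w Hw.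
        destruct (Hcs w Hw) as [_ [_ [Hc Hi]]]. unfold gauge. rewrite Hc, Hi.
        rewrite <- Him in Hlight.
        pose proof (le_div_succ_half _ _ _ (HD im) (Hlight w Hw)). lia.
    + eapply Forall_impl; [|exact Hcs]. simpl. tauto.
Qed.

Lemma new_key_node_inv x : every_node node_inv (Node [Entry x 1 false] [Leaf; Leaf] 0 1).
Proof.
  constructor; [constructor; simpl; try lia|repeat constructor].
  repeat constructor; simpl; lia.
Qed.

Lemma new_key_sorted x : sorted_keys (entries (Node [Entry x 1 false] [Leaf; Leaf] 0 1)).
Proof. repeat constructor. Qed.

Lemma new_key_adds_only x l :
  adds_only x l (entries (Node [Entry x 1 false] [Leaf; Leaf] 0 1)).
Proof. intros k [<-|[]]. right. reflexivity. Qed.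

Lemma access_invariant o x t t1 v :
  access o x t t1 v -> every_node node_inv t -> sorted_keys (entries t) ->
  every_node well_shaped t1 /\ sorted_keys (entries t1) /\
  adds_only x (entries t) (entries t1) /\ (tm t1 <= tm t + 1)%nat /\ (v <= tm t1)%nat.
Proof.
  induction 1 as [Ho | es1 e es2 e' cs c im Hk Hu
                 | es cs1 ch cs2 c im ch' v Hx Hrank Hacc IH]; intros Ht Hs.
  - split; [apply node_inv_well_shaped, new_key_node_inv|].
    split; [apply new_key_sorted|]. split; [apply new_key_adds_only|]. simpl. lia.
  - apply every_node_inv in Ht as [[Harity Hweight _ _ _ _] Hcs].
    apply upd_spec in Hu as [Hk' Hac].
    pose proof (keys_found es1 e e' es2 cs c im (S c) im Hk') as Hkeys.
    repeat split.
    + constructor.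
      * unfold well_shaped. rewrite Harity, !length_app. reflexivity.
      * eapply Forall_impl; [|exact Hcs]. apply node_inv_well_shaped.
    + unfold sorted_keys. rewrite Hkeys. exact Hs.
    + intros k Hin. rewrite Hkeys in Hin. auto.
    + simpl. rewrite !list_sum_map_mid. lia.
    + simpl. rewrite list_sum_map_mid in *. lia.
  - apply every_node_inv in Ht as [[Harity Hweight _ _ _ _] Hcs].
    destruct (sorted_descend es cs1 ch cs2 c im x Harity Hx Hrank Hs)
      as [Hsch [_ Hreplace]].
    destruct (IH (Forall_mid _ _ _ _ Hcs) Hsch) as [I1 [I2 [I3 [I4 I5]]]].
    destruct (Hreplace ch' (S c) im I2 I3) as [Hs' Hkeys'].
    repeat split; auto.
    + constructor.
      * unfold well_shaped. rewrite <- Harity, !length_app. reflexivity.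
      * apply Forall_replace_mid with (a := ch); auto.
        eapply Forall_impl; [|exact Hcs]. apply node_inv_well_shaped.
    + simpl. rewrite !list_sum_map_mid. lia.
    + simpl. rewrite !list_sum_map_mid. lia.
Qed.

(* [acx] is 0 for a key that is not yet stored. *)
Definition pos_acx (t : gsat) (x : Z) : nat := Nat.max 1 (acx t x).

Record step_spec (x : Z) (t t' : gsat) (cost : nat) : Prop := {
  step_inv : every_node node_inv t';
  step_sorted : sorted_keys (entries t');
  step_adds_only : adds_only x (entries t) (entries t');
  step_mass : (tm t' <= tm t + 1)%nat;
  step_slack : (4 * counter t' + im_of t <= 4 * counter t + 4 + im_of t')%nat;
  step_gauge : (gauge t' <= gauge t + 1)%nat;
  step_amortized : exists n, (cost + potential t' <= potential t + 30 * (n + 1))%nat /\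
                     descent_bound (pos_acx t x) (tm t) (gauge t) n }.

Lemma step_new_key x : step_spec x Leaf (Node [Entry x 1 false] [Leaf; Leaf] 0 1) 0.
Proof.
  constructor; [apply new_key_node_inv|apply new_key_sorted|apply new_key_adds_only
    |cbn; lia..|].
  exists 0%nat. split; [|exact I]. simpl. lia.
Qed.

Lemma step_rebuild D o x es cs c im t1 v t2 :
  (forall m, 1 <= D m) -> (im < 4 * S c)%nat ->
  access o x (Node es cs c im) t1 v -> rebuild D t1 t2 ->
  every_node node_inv (Node es cs c im) -> sorted_keys (entries (Node es cs c im)) ->
  step_spec x (Node es cs c im) t2 (v + tm t1).
Proof.
  intros HD Htrig Hacc [Hfresh Hent] Ht Hs.
  destruct (access_invariant _ _ _ _ _ Hacc Ht Hs) as [Hshape1 [Hs1 [Hkeys1 [Hmass1 Hv]]]].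
  destruct (fresh_ideal_invariant D t2 HD Hfresh) as [Hinv2 [Hpot2 [Hc2 Him2]]].
  apply every_node_inv in Ht as [[_ _ Hcounter Hmass _ _] _].
  assert (Htm2 : (tm t2 <= tm t1)%nat).
  { rewrite (tm_entries t2), (tm_entries t1), Hent by auto using node_inv_well_shaped.
    apply list_sum_map_filter. }
  constructor; auto.
  - rewrite Hent. apply sorted_keys_filter, Hs1.
  - intros k Hk. apply Hkeys1. rewrite Hent in Hk.
    apply in_map_iff in Hk as [e [<- He]]. apply filter_In in He. apply in_map. tauto.
  - lia.
  - rewrite Hc2. simpl. lia.
  - unfold gauge. rewrite Hc2, Him2. simpl in *. lia.
  - exists 0%nat. split; [|exact I]. rewrite Hpot2. cbn [potential].
    pose proof (node_potential_rebuild c im Hcounter Htrig). simpl in Hmass, Hmass1. lia.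
Qed.

Lemma step_found o x es1 e es2 e' cs c im :
  (4 * S c <= im)%nat -> ekey e = x -> upd o e = Some e' ->
  every_node node_inv (Node (es1 ++ e :: es2) cs c im) ->
  sorted_keys (entries (Node (es1 ++ e :: es2) cs c im)) ->
  step_spec x (Node (es1 ++ e :: es2) cs c im) (Node (es1 ++ e' :: es2) cs (S c) im) 1.
Proof.
  intros Hvisit Hk Hu Ht Hs.
  apply every_node_inv in Ht as [[Harity Hweight Hcounter Hmass Hslack Hchildren] Hcs].
  apply upd_spec in Hu as [Hk' Hac].
  pose proof (keys_found es1 e e' es2 cs c im (S c) im Hk') as Hkeys.
  simpl in Hmass. rewrite list_sum_map_mid in Hweight, Hmass, Hslack.
  constructor.
  - constructor; auto. constructor; simpl; rewrite ?list_sum_map_mid; try lia.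
    + rewrite Harity, !length_app. reflexivity.
    + eapply Forall_impl; [|exact Hchildren]. simpl. lia.
  - unfold sorted_keys. rewrite Hkeys. exact Hs.
  - intros k Hin. rewrite Hkeys in Hin. auto.
  - simpl. rewrite !list_sum_map_mid. lia.
  - simpl. lia.
  - cbn. lia.
  - exists 0%nat. split; [|exact I]. cbn [potential].
    pose proof (node_potential_succ c im). lia.
Qed.

Lemma tm_Node_mid es cs1 ch cs2 c im :
  tm (Node es (cs1 ++ ch :: cs2) c im) =
  (list_sum (map eac es) + list_sum (map tm cs1) + tm ch + list_sum (map tm cs2))%nat.
Proof. simpl. rewrite list_sum_map_mid. lia. Qed.

Lemma potential_Node_mid es cs1 ch cs2 c im :
  potential (Node es (cs1 ++ ch :: cs2) c im) =
  (node_potential c im + list_sum (map potential cs1) + potential ch +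
   list_sum (map potential cs2))%nat.
Proof. simpl. rewrite list_sum_map_mid. lia. Qed.

Lemma node_inv_descend es cs1 ch ch' cs2 c im :
  node_inv es (cs1 ++ ch :: cs2) c im -> (4 * S c <= im)%nat ->
  (tm ch' <= tm ch + 1)%nat ->
  (4 * counter ch' + im_of ch <= 4 * counter ch + 4 + im_of ch')%nat ->
  (gauge ch' <= gauge ch + 1)%nat ->
  node_inv es (cs1 ++ ch' :: cs2) (S c) im.
Proof.
  intros [Harity Hweight Hcounter Hmass Hslack Hchildren] Hvisit Hm Hs Hg.
  rewrite tm_Node_mid in Hmass. rewrite !list_sum_map_mid in Hslack.
  pose proof (Forall_mid _ _ _ _ Hchildren) as Hgauge. cbn beta in Hgauge.
  constructor; auto; rewrite ?tm_Node_mid, ?list_sum_map_mid; try lia.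
  - rewrite <- Harity, !length_app. reflexivity.
  - apply Forall_replace_mid with (a := ch); [|lia].
    eapply Forall_impl; [|exact Hchildren]. simpl. lia.
Qed.

Lemma tm_le_gauge t : every_node node_inv t -> (tm t <= gauge t)%nat.
Proof. intros [|es cs c im [] _]; cbn in *; lia. Qed.

Lemma pos_acx_le_tm es cs c im x :
  every_node node_inv (Node es cs c im) ->
  (pos_acx (Node es cs c im) x <= tm (Node es cs c im))%nat.
Proof.
  intros Ht. pose proof (acx_le_tm _ x (node_inv_well_shaped _ Ht)).
  apply every_node_inv in Ht as [[_ Hweight _ _ _ _] _].
  unfold pos_acx. cbn [tm] in *. lia.
Qed.

Lemma gauge_le_tm_light t :
  every_node node_inv t -> (8 * counter t <= im_of t)%nat -> (4 * gauge t <= 9 * tm t)%nat.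
Proof. intros Ht. pose proof (im_of_le_tm t Ht). unfold gauge. lia. Qed.

Lemma gauge_child_shrink es cs1 ch cs2 c im :
  node_inv es (cs1 ++ ch :: cs2) c im ->
  (4 * gauge ch <= 3 * gauge (Node es (cs1 ++ ch :: cs2) c im))%nat.
Proof.
  intros [_ _ Hcounter _ _ Hchildren].
  pose proof (Forall_mid _ _ _ _ Hchildren) as Hgauge. cbn in *. lia.
Qed.

Lemma step_descend x es cs1 ch cs2 c im ch' cost :
  (4 * S c <= im)%nat -> ~ In x (map ekey es) ->
  length cs1 = length (filter (fun e => Z.ltb (ekey e) x) es) ->
  every_node node_inv (Node es (cs1 ++ ch :: cs2) c im) ->
  sorted_keys (entries (Node es (cs1 ++ ch :: cs2) c im)) ->
  (every_node node_inv ch -> sorted_keys (entries ch) -> step_spec x ch ch' cost) ->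
  step_spec x (Node es (cs1 ++ ch :: cs2) c im) (Node es (cs1 ++ ch' :: cs2) (S c) im) (S cost).
Proof.
  intros Hvisit Hx Hrank Ht Hs IH.
  pose proof Ht as Ht0. apply every_node_inv in Ht as [Hnode Hcs].
  destruct (sorted_descend es cs1 ch cs2 c im x (inv_arity _ _ _ _ Hnode) Hx Hrank Hs)
    as [Hsch [Hacx Hreplace]].
  pose proof (Forall_mid _ _ _ _ Hcs) as Hch.
  destruct (IH Hch Hsch) as [Iinv Isorted Ikeys Imass Islack Igauge [n [Icost Ibound]]].
  destruct (Hreplace ch' (S c) im Isorted Ikeys) as [Hsorted' Hkeys'].
  assert (Hpos : pos_acx (Node es (cs1 ++ ch :: cs2) c im) x = pos_acx ch x)
    by (unfold pos_acx; rewrite Hacx; reflexivity).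
  constructor; auto.
  - constructor; [apply node_inv_descend with (ch := ch); auto|].
    apply Forall_replace_mid with (a := ch); auto.
  - rewrite !tm_Node_mid. lia.
  - simpl. lia.
  - cbn. lia.
  - rewrite !potential_Node_mid.
    destruct (le_lt_dec (8 * c) im) as [Hlight|Hheavy].
    + exists (S n). pose proof (node_potential_succ c im). split; [lia|].
      apply (descent_bound_light _ _ _ (tm ch) (gauge ch)).
      * apply gauge_child_shrink, Hnode.
      * apply gauge_le_tm_light; auto.
      * apply pos_acx_le_tm, Ht0.
      * apply tm_le_gauge, Ht0.
      * rewrite Hpos. exact Ibound.
    + exists n. pose proof (node_potential_succ_heavy c im Hvisit Hheavy). split; [lia|].
      rewrite Hpos. apply (descent_bound_mono _ _ _ (tm ch) (gauge ch)); auto.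
      { rewrite tm_Node_mid. lia. }
      pose proof (gauge_child_shrink _ _ _ _ _ _ Hnode). lia.
Qed.

Lemma opstep_spec D o x t t' cost : (forall m, 1 <= D m) -> opstep D o x t t' cost ->
  every_node node_inv t -> sorted_keys (entries t) -> step_spec x t t' cost.
Proof.
  intros HD Hstep. induction Hstep; intros Ht Hs.
  - apply step_new_key.
  - eapply step_rebuild; eauto. apply rebuild_trigger; auto.
  - eapply step_found; eauto. apply no_rebuild_trigger; auto.
  - apply step_descend; auto. apply no_rebuild_trigger; auto.
Qed.

Lemma log2_le x y : 0 < x -> x <= y -> log2 x <= log2 y.
Proof.
  intros Hx Hxy. unfold log2. apply Rmult_le_compat_r.
  - left. apply Rinv_0_lt_compat. rewrite <- ln_1. apply ln_increasing; lra.
  - destruct (Rle_lt_or_eq_dec x y Hxy) as [H| ->]; [left; apply ln_increasing|]; lra.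
Qed.

Lemma log2_mult x y : 0 < x -> 0 < y -> log2 (x * y) = log2 x + log2 y.
Proof. intros. unfold log2. rewrite ln_mult by auto. lra. Qed.

Lemma log2_Rinv x : 0 < x -> log2 (/ x) = - log2 x.
Proof. intros. unfold log2. rewrite ln_Rinv by auto. lra. Qed.

Lemma log2_pow x k : 0 < x -> log2 (x ^ k) = INR k * log2 x.
Proof. intros. unfold log2. rewrite ln_pow by auto. lra. Qed.

Lemma log2_2 : log2 2 = 1.
Proof.
  unfold log2. apply Rinv_r. apply Rgt_not_eq.
  rewrite <- ln_1. apply ln_increasing; lra.
Qed.

Lemma log2_3 : log2 3 <= 8 / 5.
Proof.
  assert (H : log2 (3 ^ 5) <= log2 (2 ^ 8)) by (apply log2_le; simpl; lra).
  rewrite !log2_pow, log2_2 in H by lra. simpl in H. lra.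
Qed.

Lemma light_levels_le_log2 a m g n : (a <= m)%nat ->
  descent_bound (Nat.max 1 a) m g n ->
  INR (n + 1) <= 10 * (1 + log2 (INR (S m) / INR (S a))).
Proof.
  intros Ham Hn.
  assert (Ha : 0 < INR (S a)) by apply lt_0_INR, Nat.lt_0_succ.
  assert (Hm : 0 < INR (S m)) by apply lt_0_INR, Nat.lt_0_succ.
  assert (HL : log2 (INR (S m) / INR (S a)) = log2 (INR (S m)) - log2 (INR (S a))).
  { unfold Rdiv. rewrite log2_mult, log2_Rinv by auto using Rinv_0_lt_compat. lra. }
  assert (Hlog : log2 (INR (S a)) <= log2 (INR (S m))) by (apply log2_le, le_INR; auto; lia).
  rewrite HL. destruct n as [|k]; [change (INR (0 + 1)) with 1; lra|]. destruct Hn as [Hn _].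
  assert (Hnat : (4 ^ k * (2 * S a) <= 9 * 3 ^ k * S m)%nat).
  { assert (4 ^ k * (2 * S a) <= 4 ^ k * (4 * Nat.max 1 a))%nat
      by (apply Nat.mul_le_mono_l; lia).
    assert (9 * 3 ^ k * m <= 9 * 3 ^ k * S m)%nat by (apply Nat.mul_le_mono_l; lia).
    lia. }
  apply le_INR in Hnat. rewrite !mult_INR, !pow_INR in Hnat.
  replace (INR 2) with 2 in Hnat by reflexivity.
  replace (INR 4) with (2 ^ 2) in Hnat by (simpl; lra).
  replace (INR 9) with (3 ^ 2) in Hnat by (simpl; lra).
  replace (INR 3) with 3 in Hnat by (simpl; lra).
  apply log2_le in Hnat; [|apply Rmult_lt_0_compat; [apply pow_lt|]; lra].
  rewrite !log2_mult, !log2_pow, log2_2 in Hnat by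
    (try apply Rmult_lt_0_compat; try apply pow_lt; lra).
  replace (INR 2) with 2 in Hnat by (simpl; lra).
  pose proof log2_3. pose proof (pos_INR k).
  assert (INR k * log2 3 <= INR k * (8 / 5)) by (apply Rmult_le_compat_l; auto).
  rewrite plus_INR, S_INR. simpl (INR 1). lra.
Qed.

Lemma opstep_amortized D o x t t' cost :
  (forall m, 1 <= D m) -> opstep D o x t t' cost ->
  every_node node_inv t -> sorted_keys (entries t) ->
  every_node node_inv t' /\ sorted_keys (entries t') /\
  INR cost + INR (potential t') <=
  INR (potential t) + 300 * (1 + log2 (INR (S (tm t)) / INR (S (acx t x)))).
Proof.
  intros HD Hstep Ht Hs.
  destruct (opstep_spec D o x t t' cost HD Hstep Ht Hs)
    as [Hinv Hsorted _ _ _ _ [n [Hcost Hbound]]].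
  split; [exact Hinv|split; [exact Hsorted|]].
  assert (Hlog := light_levels_le_log2 (acx t x) (tm t) (gauge t) n
                    (acx_le_tm t x (node_inv_well_shaped t Ht)) Hbound).
  apply le_INR in Hcost. rewrite !plus_INR, mult_INR in Hcost.
  replace (INR 30) with 30 in Hcost by (simpl; lra). lra.
Qed.

Lemma exec_amortized D t A B : (forall m, 1 <= D m) -> exec D t A B ->
  every_node node_inv t /\ sorted_keys (entries t) /\ A + INR (potential t) <= 300 * B.
Proof.
  intros HD. induction 1 as [|t A B o x t' cost Hexec IH Hstep].
  - split; [constructor|split; [constructor|simpl; lra]].
  - destruct IH as [Ht [Hs HA]].
    destruct (opstep_amortized D o x t t' cost HD Hstep Ht Hs) as [Ht' [Hs' Hcost]].
    split; [exact Ht'|split; [exact Hs'|lra]].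
Qed.

Theorem lemma3 :
  forall D : nat -> R, sqrt_bounded D ->
  exists c : R, 0 < c /\
    forall (t : gsat) (A B : R), exec D t A B -> A <= c * B.
Proof.
  intros D [HD _]. exists 300. split; [lra|].
  intros t A B Hexec. destruct (exec_amortized D t A B HD Hexec) as [_ [_ HA]].
  pose proof (pos_INR (potential t)). lra.
Qed.
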